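(* Let $\mathscr{H}$ be a complex Hilbert space, $N(\cdot)$ a norm on $\mathbb{B}(\mathscr{H})$, and $B,C\in\mathbb{B}(\mathscr{H})$ self-adjoint. Then $$\frac{1}{\sqrt2}\max\{N(B+C),N(B-C)\}\leq w_{(N,e)}(B,C)\leq\frac{1}{\sqrt2}\sqrt{N^2(B+C)+N^2(B-C)}.$$
   Context: For $T\in\mathbb{B}(\mathscr{H})$, $\Re(T)=\frac12(T+T^* )$. For $B,C\in\mathbb{B}(\mathscr{H})$, $w_{(N,e)}(B,C)=\sup_{\lambda_1,\lambda_2\in\mathbb{C},\ |\lambda_1|^2+|\lambda_2|^2\leq 1}\sup_{\theta\in\mathbb{R}} N(\Re(e^{i\theta}(\lambda_1B+\lambda_2C)))$. *)

From HB Require Import structures.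
From mathcomp Require Import all_boot all_order all_algebra.
From mathcomp Require Import complex.
From mathcomp Require Import all_classical all_reals.
From mathcomp Require Import trigo.
From Stdlib Require Import ClassicalEpsilon.
Set Implicit Arguments. Unset Strict Implicit. Unset Printing Implicit Defensive.
Import Order.TTheory GRing.Theory Num.Theory.
Local Open Scope ring_scope.
Local Open Scope complex_scope.

Section Hilbert.
Variable R : realType.
Local Notation C := R[i].

Definition cabs (a : C) : R := Num.sqrt (complex.Re a ^+ 2 + complex.Im a ^+ 2).

Definition expi (t : R) : C := cos t +i* sin t.

Variable H : lmodType C.
Variable ip : H -> H -> C.

Definition is_inner_product : Prop :=
  [/\ forall (a : C) (x y z : H), ip (a *: x + y) z = a * ip x z + ip y z,
      forall x y : H, ip y x = (ip x y)^*,
      forall x : H, 0 <= ip x x &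
      forall x : H, ip x x = 0 -> x = 0].

Definition hnorm (x : H) : R := Num.sqrt (complex.Re (ip x x)).

Definition hcomplete : Prop :=
  forall u : nat -> H,
    (forall e : R, 0 < e -> exists M : nat, forall m n : nat,
        (M <= m)%N -> (M <= n)%N -> hnorm (u m - u n) < e) ->
    exists l : H, forall e : R, 0 < e -> exists M : nat, forall n : nat,
        (M <= n)%N -> hnorm (u n - l) < e.

Definition is_hilbert : Prop := is_inner_product /\ hcomplete.

Definition bounded_op (T : H -> H) : Prop :=
  (forall (a : C) (x y : H), T (a *: x + y) = a *: T x + T y) /\
  exists M : R, forall x : H, hnorm (T x) <= M * hnorm x.

Definition is_adjoint (T S : H -> H) : Prop :=
  bounded_op S /\ forall x y : H, ip (T x) y = ip x (S y).

(* the adjoint T^* (chosen; unique on a Hilbert space) *)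
Definition adj (T : H -> H) : H -> H :=
  epsilon (inhabits (fun x : H => x)) (is_adjoint T).

Definition selfadjoint (T : H -> H) : Prop := adj T = T.

Definition ReOp (T : H -> H) : H -> H :=
  fun x => (2%:R)^-1 *: (T x + adj T x).

Definition is_norm_on_BH (N : (H -> H) -> R) : Prop :=
  [/\ forall T, bounded_op T -> 0 <= N T,
      forall T, bounded_op T -> N T = 0 -> T = (fun _ => 0),
      forall (a : C) T, bounded_op T -> N (fun x => a *: T x) = cabs a * N T &
      forall T S, bounded_op T -> bounded_op S ->
        N (fun x => T x + S x) <= N T + N S].

Definition wNe (N : (H -> H) -> R) (B Cop : H -> H) : R :=
  sup [set r : R | exists (l1 l2 : C) (t : R),
        cabs l1 ^+ 2 + cabs l2 ^+ 2 <= 1 /\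
        r = N (ReOp (fun x => expi t *: (l1 *: B x + l2 *: Cop x)))].

End Hilbert.

(* For self-adjoint B and C, Re(e^{it} (l1 B + l2 C)) is the real combination a B + b C with
   a = Re(e^{it} l1), b = Re(e^{it} l2), so a^2 + b^2 <= |l1|^2 + |l2|^2 <= 1.  Writing
   a B + b C = (a+b)/2 (B+C) + (a-b)/2 (B-C), the triangle inequality for N and Cauchy-Schwarz
   in R^2 give N(a B + b C) <= ((a^2 + b^2)/2)^{1/2} (N^2(B+C) + N^2(B-C))^{1/2}: the upper bound.
   The choices l1 = 1/sqrt 2, l2 = +-1/sqrt 2, t = 0 give the lower bound.
   The adjoint in Re(T) is picked by Hilbert's epsilon, so its defining identity is available
   only once adjoints of bounded operators are known to exist: this is the Riesz representation
   theorem, obtained from a minimal-norm vector on the hyperplane f = 1, which exists by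
   completeness and is orthogonal to ker f. *)

From HB Require Import structures.
From mathcomp Require Import all_boot all_order all_algebra.
From mathcomp Require Import complex.
From mathcomp Require Import all_classical all_reals trigo.
From Stdlib Require Import ClassicalEpsilon.
From mathcomp Require Import ring lra.
Set Implicit Arguments. Unset Strict Implicit. Unset Printing Implicit Defensive.
Import Order.TTheory GRing.Theory Num.Theory.
Local Open Scope ring_scope.
Local Open Scope complex_scope.

Lemma ler_add_mul_small (R : realFieldType) (a b c : R) : 0 <= c ->
  (forall e, 0 < e -> e <= 1 -> a <= b + e * c) -> a <= b.
Proof.
move=> c0 h; apply/ler_addgt0Pr => e e0.
have c1 : 0 < c + 1 by rewrite ltr_wpDl.
pose g := Num.min 1 (e / (c + 1)).
have g0 : 0 < g by rewrite lt_min ltr01 divr_gt0.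
apply: (le_trans (h g g0 _)); first by rewrite ge_min lexx.
rewrite lerD2l.
have : g <= e / (c + 1) by rewrite ge_min lexx orbT.
rewrite ler_pdivlMr // => ge.
by apply: le_trans ge; rewrite ler_wpM2l ?ltW // ltrDl.
Qed.

Lemma exists_inv_succ_lt (R : archiRealFieldType) (e : R) : 0 < e ->
  exists K, forall n, (K <= n)%N -> n.+1%:R^-1 < e.
Proof.
move=> e0; exists (Num.Def.archi_bound e^-1) => n hn.
rewrite invf_plt ?posrE ?ltr0Sn //.
have ei : 0 <= e^-1 by rewrite invr_ge0 ltW.
apply: lt_le_trans (archi_boundP ei) _.
by rewrite ler_nat ltnW.
Qed.

Lemma invsqrt2_sqr_add (R : rcfType) :
  (Num.sqrt 2)^-1 ^+ 2 + (Num.sqrt 2)^-1 ^+ 2 = 1 :> R.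
Proof. by rewrite exprVn sqr_sqrtr //; field. Qed.

Lemma half_sum_diff_le (R : rcfType) (a b P Q : R) :
  a ^+ 2 + b ^+ 2 <= 1 -> 0 <= P -> 0 <= Q ->
  `|(a + b) / 2| * P + `|(a - b) / 2| * Q
    <= (Num.sqrt 2)^-1 * Num.sqrt (P ^+ 2 + Q ^+ 2).
Proof.
move=> ab P0 Q0.
have uv : `|(a + b) / 2| ^+ 2 + `|(a - b) / 2| ^+ 2 <= 2^-1.
  rewrite !real_normK ?num_real //.
  have -> : ((a + b) / 2) ^+ 2 + ((a - b) / 2) ^+ 2 = (a ^+ 2 + b ^+ 2) / 2 by field.
  lra.
move: uv; set u := `|_ / 2|; set v := `|_ / 2| => uv.
have L0 : 0 <= u * P + v * Q by rewrite addr_ge0 // mulr_ge0 ?normr_ge0.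
rewrite -sqrtrV // -sqrtrM ?invr_ge0 // -(ger0_norm L0) -sqrtr_sqr.
rewrite ler_sqrt ?mulr_ge0 ?invr_ge0 ?addr_ge0 ?sqr_ge0 //.
have := ler_wpM2r (addr_ge0 (sqr_ge0 P) (sqr_ge0 Q)) uv.
have := sqr_ge0 (u * Q - v * P); nra.
Qed.

Section ComplexModulus.
Variable R : realType.
Implicit Types (z : R[i]) (r t : R).

Lemma cabsE z : (cabs z)%:C = `|z|.
Proof. by rewrite normc_def. Qed.

Lemma cabs_ge0 z : 0 <= cabs z.
Proof. exact: sqrtr_ge0. Qed.

Lemma cabs_sqr z : cabs z ^+ 2 = complex.Re z ^+ 2 + complex.Im z ^+ 2.
Proof. by rewrite sqr_sqrtr // addr_ge0 // sqr_ge0. Qed.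

Lemma cabsR r : cabs r%:C = `|r|.
Proof. by rewrite /cabs /= expr0n /= addr0 sqrtr_sqr. Qed.

Lemma cabs_eq0 z : (cabs z == 0) = (z == 0).
Proof. by rewrite -[z == 0]normr_eq0 -cabsE eq_complex /= eqxx andbT. Qed.

Lemma Re_le_cabs z : complex.Re z <= cabs z.
Proof.
apply: le_trans (ler_norm _) _; rewrite -sqrtr_sqr ler_sqrt ?cabs_sqr.
  by rewrite lerDl sqr_ge0.
by rewrite addr_ge0 ?sqr_ge0.
Qed.

Lemma Re_sqr_le_cabs_sqr z : complex.Re z ^+ 2 <= cabs z ^+ 2.
Proof. by rewrite cabs_sqr lerDl sqr_ge0. Qed.

Lemma cabs_expiM t z : cabs (expi t * z) = cabs z.
Proof.
rewrite /cabs /expi; congr Num.sqrt; case: z => x y /=.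
transitivity ((cos t ^+ 2 + sin t ^+ 2) * (x ^+ 2 + y ^+ 2)); first ring.
by rewrite cos2Dsin2 mul1r.
Qed.

End ComplexModulus.

Section InnerProductSpace.
Variables (R : realType) (H : lmodType R[i]) (ip : H -> H -> R[i]).
Hypothesis hip : is_inner_product ip.
Implicit Types (a : R[i]) (x y z : H).

Lemma ipDZl a x y z : ip (a *: x + y) z = a * ip x z + ip y z.
Proof. by case: hip. Qed.

Lemma ipC x y : ip y x = (ip x y)^*.
Proof. by case: hip. Qed.

Lemma ip0l z : ip 0 z = 0.
Proof.
have := ipDZl 1 0 0 z; rewrite scale1r addr0 mul1r => h.
by apply: (@addrI _ (ip 0 z)); rewrite addr0 -h.
Qed.

Lemma ipDl x y z : ip (x + y) z = ip x z + ip y z.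
Proof. by rewrite -[x]scale1r ipDZl mul1r scale1r. Qed.

Lemma ipZl a x z : ip (a *: x) z = a * ip x z.
Proof. by rewrite -[a *: x]addr0 ipDZl ip0l addr0. Qed.

Lemma ipDr x y z : ip x (y + z) = ip x y + ip x z.
Proof. by rewrite ipC ipDl rmorphD /= -!ipC. Qed.

Lemma ipZr a x y : ip x (a *: y) = a^* * ip x y.
Proof. by rewrite ipC ipZl rmorphM /= -ipC. Qed.

Lemma ip0r x : ip x 0 = 0.
Proof. by rewrite ipC ip0l conjc0. Qed.

Lemma ipBr x y z : ip x (y - z) = ip x y - ip x z.
Proof. by rewrite ipDr -scaleN1r ipZr rmorphN1 mulN1r. Qed.

Definition sqnorm x : R := complex.Re (ip x x).

Lemma ipxx x : ip x x = (sqnorm x)%:C.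
Proof.
have : 0 <= ip x x by case: hip.
by rewrite /sqnorm; case: (ip x x) => a b /ger0_Im /= ->.
Qed.

Lemma sqnorm_ge0 x : 0 <= sqnorm x.
Proof. have : 0 <= ip x x by case: hip. by rewrite ipxx lecR. Qed.

Lemma sqnorm_eq0 x : sqnorm x = 0 -> x = 0.
Proof. by move=> h; case: hip => _ _ _; apply; rewrite ipxx h. Qed.

Lemma sqnorm0 : sqnorm 0 = 0.
Proof. by rewrite /sqnorm ip0l. Qed.

Lemma sqnormDZ x y t : sqnorm (x + t *: y) = sqnorm x
  + 2 * (complex.Re t * complex.Re (ip x y) + complex.Im t * complex.Im (ip x y))
  + cabs t ^+ 2 * sqnorm y.
Proof.
rewrite {1}/sqnorm ipDl !ipDr !ipZl !ipZr (ipC x y) !ipxx cabs_sqr.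
move: (ip x y) (sqnorm x) (sqnorm y) => c a b.
by case: t => t1 t2; case: c => c1 c2 /=; simpc; ring.
Qed.

Lemma sqnormZ a y : sqnorm (a *: y) = cabs a ^+ 2 * sqnorm y.
Proof. by rewrite -[a *: y]add0r sqnormDZ sqnorm0 ip0l /=; ring. Qed.

Lemma sqnormD x y : sqnorm (x + y) = sqnorm x + 2 * complex.Re (ip x y) + sqnorm y.
Proof. by rewrite -[y in x + y]scale1r sqnormDZ cabs_sqr /=; ring. Qed.

Lemma parallelogram x y : sqnorm (x - y) + sqnorm (x + y) = 2 * sqnorm x + 2 * sqnorm y.
Proof. by rewrite -scaleN1r sqnormDZ sqnormD cabs_sqr /=; ring. Qed.

Lemma hnorm_sqr x : hnorm ip x ^+ 2 = sqnorm x.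
Proof. by rewrite sqr_sqrtr // sqnorm_ge0. Qed.

Lemma hnorm_ge0 x : 0 <= hnorm ip x.
Proof. exact: sqrtr_ge0. Qed.

Lemma hnormZ a y : hnorm ip (a *: y) = cabs a * hnorm ip y.
Proof. by rewrite /hnorm -/(sqnorm _) sqnormZ sqrtrM ?sqr_ge0 // sqrtr_sqr ger0_norm ?cabs_ge0. Qed.

Lemma hnormN x : hnorm ip (- x) = hnorm ip x.
Proof.
rewrite /hnorm -!/(sqnorm _) -scaleN1r sqnormZ cabs_sqr /=.
by rewrite sqrrN expr1n oppr0 expr0n addr0 mul1r.
Qed.

Lemma cauchy_schwarz x y : cabs (ip x y) <= hnorm ip x * hnorm ip y.
Proof.
rewrite /cabs /hnorm -!/(sqnorm _) -sqrtrM ?sqnorm_ge0 //.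
rewrite ler_sqrt ?mulr_ge0 ?sqnorm_ge0 //.
have [/sqnorm_eq0 ->|y_neq0] := eqVneq (sqnorm y) 0.
  by rewrite ip0r /= sqnorm0 mulr0 expr0n /= addr0.
have y_gt0 : 0 < sqnorm y by rewrite lt0r y_neq0 sqnorm_ge0.
set c1 := complex.Re (ip x y); set c2 := complex.Im (ip x y).
have := sqnorm_ge0 (x + ((- (c1 / sqnorm y)) +i* (- (c2 / sqnorm y))) *: y).
rewrite sqnormDZ cabs_sqr /= -/c1 -/c2.
have e1 : (- (c1 / sqnorm y)) * sqnorm y = - c1 by field; rewrite gt_eqF.
have e2 : (- (c2 / sqnorm y)) * sqnorm y = - c2 by field; rewrite gt_eqF.
move: e1 e2; move: (- (c1 / sqnorm y)) (- (c2 / sqnorm y)) => t1 t2 e1 e2 h.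
have := mulr_ge0 (ltW y_gt0) h.
nra.
Qed.

Lemma hnormD x y : hnorm ip (x + y) <= hnorm ip x + hnorm ip y.
Proof.
have cs := le_trans (Re_le_cabs (ip x y)) (cauchy_schwarz x y).
rewrite -[X in _ <= X]ger0_norm ?addr_ge0 ?hnorm_ge0 // -sqrtr_sqr.
rewrite [hnorm ip (x + y)]/hnorm -/(sqnorm _) ler_sqrt ?sqr_ge0 //.
rewrite sqnormD -!hnorm_sqr; nra.
Qed.

Lemma ip_ext u v : (forall x, ip x u = ip x v) -> u = v.
Proof.
move=> h; apply/eqP; rewrite -subr_eq0; apply/eqP; apply: sqnorm_eq0.
by rewrite /sqnorm ipBr h subrr.
Qed.

Definition hcauchy (u : nat -> H) := forall e : R, 0 < e -> exists M : nat,
  forall m n : nat, (M <= m)%N -> (M <= n)%N -> hnorm ip (u m - u n) < e.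

Definition hcvg (u : nat -> H) (l : H) := forall e : R, 0 < e -> exists M : nat,
  forall n : nat, (M <= n)%N -> hnorm ip (u n - l) < e.

Lemma sqnorm_cvg_le u l (d : R) : hcvg u l ->
  (forall n, sqnorm (u n) <= d + n.+1%:R^-1) -> sqnorm l <= d.
Proof.
(* [(|u n| + e)^2 <= (d + e) + 2 e (|d| + 2) + e] once [|u n - l| < e] and [1/(n+1) < e]. *)
move=> ul ud; apply: (@ler_add_mul_small _ _ _ (2 * `|d| + 6)).
  by have := normr_ge0 d; lra.
move=> e e0 e1.
have [N1 hN1] := ul e e0; have [K hK] := exists_inv_succ_lt e0.
pose n := maxn N1 K.
have close := hN1 n (leq_maxl _ _).
have un : hnorm ip (u n) ^+ 2 <= d + e.
  by rewrite hnorm_sqr; apply: le_trans (ud n) _; rewrite lerD2l ltW // hK ?leq_maxr.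
have un_le : hnorm ip (u n) <= `|d| + 2.
  have := ler_norm d; have := sqr_ge0 (hnorm ip (u n) - 1); nra.
have tri : hnorm ip l <= hnorm ip (u n) + e.
  have := hnormD (u n) (l - u n); rewrite addrC subrK -[l - u n]opprB hnormN.
  by move/le_trans; apply; rewrite lerD2l ltW.
have := hnorm_ge0 l; have := hnorm_ge0 (u n); rewrite -hnorm_sqr; nra.
Qed.

Section LinearForm.
Variable f : H -> R[i].
Hypothesis f_lin : forall a x y, f (a *: x + y) = a * f x + f y.

Lemma linform0 : f 0 = 0.
Proof.
have := f_lin 1 0 0; rewrite scale1r addr0 mul1r => h.
by apply: (@addrI _ (f 0)); rewrite addr0 -h.
Qed.

Lemma linformZ a x : f (a *: x) = a * f x.
Proof. by rewrite -[a *: x]addr0 f_lin linform0 addr0. Qed.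

Lemma linformD x y : f (x + y) = f x + f y.
Proof. by rewrite -[x]scale1r f_lin mul1r scale1r. Qed.

Lemma linformB x y : f (x - y) = f x - f y.
Proof. by rewrite linformD -scaleN1r linformZ mulN1r. Qed.

Lemma level_sqnormB (d : R) : (forall y, f y = 1 -> d <= sqnorm y) ->
  forall x y, f x = 1 -> f y = 1 ->
  sqnorm (x - y) <= 2 * (sqnorm x - d) + 2 * (sqnorm y - d).
Proof.
move=> d_lb x y fx fy.
have mid : d <= sqnorm ((2^-1)%:C *: (x + y)).
  apply: d_lb; rewrite linformZ linformD fx fy -rmorphD -rmorphM /=.
  by congr _%:C; field.
move: mid; rewrite sqnormZ cabsR ger0_norm ?invr_ge0 // => mid.
have := parallelogram x y; nra.
Qed.

Lemma level_minimizer_orthogonal l :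
  f l = 1 -> (forall y, f y = 1 -> sqnorm l <= sqnorm y) ->
  forall k, f k = 0 -> ip l k = 0.
Proof.
move=> fl lmin k fk.
(* Minimality at [l - s <l, k> k] gives [|<l, k>|^2 s (s |k|^2 - 2) >= 0] with [s |k|^2 < 1]. *)
pose s := (sqnorm k + 1)^-1.
have k0 := sqnorm_ge0 k.
have s0 : 0 < s by rewrite invr_gt0; lra.
have sk : s * sqnorm k < 1 by rewrite /s mulrC ltr_pdivrMr ?mul1r; lra.
set c := ip l k.
have := lmin (l + ((- (s * complex.Re c)) +i* (- (s * complex.Im c))) *: k).
rewrite linformD linformZ fk mulr0 addr0 => /(_ fl).
rewrite sqnormDZ cabs_sqr -/c /=.
case: c => c1 c2 /= h.
have c0 : c1 ^+ 2 + c2 ^+ 2 <= 0.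
  have : 0 <= s * ((c1 ^+ 2 + c2 ^+ 2) * (s * sqnorm k - 2)) by nra.
  rewrite pmulr_rge0 //; nra.
by congr (_ +i* _); nra.
Qed.

Variable M : R.
Hypothesis f_bounded : forall x, cabs (f x) <= M * hnorm ip x.

Lemma linform_cvg u l c : hcvg u l -> (forall n, f (u n) = c) -> f l = c.
Proof.
move=> ul fu.
have K0 : 0 < `|M| + 1 by rewrite ltr_pwDr.
have fK x : cabs (f x) <= (`|M| + 1) * hnorm ip x.
  apply: le_trans (f_bounded x) _; rewrite ler_wpM2r ?hnorm_ge0 //.
  by apply: le_trans (ler_norm M) _; rewrite lerDl.
suff : cabs (c - f l) <= 0.
  by rewrite le_eqVlt ltNge cabs_ge0 orbF cabs_eq0 subr_eq0 => /eqP.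
apply/ler_addgt0Pr => e e0; rewrite add0r.
have [n hn] := ul _ (divr_gt0 e0 K0).
rewrite -(fu n) -linformB; apply: le_trans (fK _) _.
by rewrite mulrC -ler_pdivlMr // ltW // hn.
Qed.

Hypothesis hcomp : hcomplete ip.

Lemma level_minimizer_exists : (exists y, f y = 1) ->
  exists2 l, f l = 1 & forall y, f y = 1 -> sqnorm l <= sqnorm y.
Proof.
move=> [y0 fy0].
pose S := (sqnorm @` [set y | f y = 1])%classic.
have S0 : (S !=set0)%classic by exists (sqnorm y0), y0.
have S_lb : has_lbound S by exists 0 => _ [y _ <-]; exact: sqnorm_ge0.
pose d := inf S.
have d_lb y : f y = 1 -> d <= sqnorm y by move=> fy; apply: ge_inf S_lb _ _; exists y.
have [u hu] : {u : nat -> H &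
    forall n, f (u n) = 1 /\ sqnorm (u n) < d + n.+1%:R^-1}.
  apply: (boolp.choice (P := fun n y => f y = 1 /\ sqnorm y < d + n.+1%:R^-1)) => n.
  have pos : 0 < (n.+1%:R : R)^-1 by rewrite invr_gt0 ltr0Sn.
  have [_ [y fy <-] lt] := inf_adherent pos (conj S0 S_lb).
  by exists y.
have u_cauchy : hcauchy u.
  move=> e e0.
  have [K hK] := exists_inv_succ_lt (divr_gt0 (exprn_gt0 2 e0) (ltr0n _ 4)).
  exists K => m n hm hn.
  rewrite -(ltr_pXn2r (_ : 0 < 2)%N) ?nnegrE ?hnorm_ge0 ?ltW // hnorm_sqr.
  have := level_sqnormB d_lb (hu m).1 (hu n).1.
  have := (hu m).2; have := (hu n).2; have := hK m hm; have := hK n hn.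
  move: (e ^+ 2) (m.+1%:R^-1 : R) (n.+1%:R^-1 : R) => E a b; lra.
have [l ul] := hcomp u_cauchy.
exists l; first exact: linform_cvg ul (fun n => (hu n).1).
move=> y fy; apply: le_trans (d_lb y fy).
by apply: sqnorm_cvg_le ul _ => n; apply/ltW/(hu n).2.
Qed.

Lemma riesz_representation : exists z, forall x, f x = ip x z.
Proof.
have [[x1 fx1]|f_eq0] := boolp.pselect (exists x, f x != 0); last first.
  exists 0 => x; rewrite ip0r; apply/eqP/negPn/negP => fx; apply: f_eq0.
  by exists x.
have [l fl lmin] : exists2 l, f l = 1 & forall y, f y = 1 -> sqnorm l <= sqnorm y.
  by apply: level_minimizer_exists; exists ((f x1)^-1 *: x1); rewrite linformZ mulVf.
have l_neq0 : sqnorm l != 0.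
  apply/eqP => /sqnorm_eq0 l0; have := fl; rewrite l0 linform0 => /eqP.
  by rewrite eq_sym oner_eq0.
exists ((sqnorm l)^-1%:C *: l) => x.
have : ip l (x - f x *: l) = 0.
  apply: (level_minimizer_orthogonal fl lmin).
  by rewrite linformB linformZ fl mulr1 subrr.
rewrite ipBr ipZr ipxx => /eqP; rewrite subr_eq0 => /eqP lx.
rewrite ipZr ipC lx; move: (sqnorm l) l_neq0 (f x) => r r0 [a b].
by apply/eqP; rewrite eq_complex /=; apply/andP; split; apply/eqP; field.
Qed.

End LinearForm.

Lemma bounded_scale a T : bounded_op ip T -> bounded_op ip (fun x => a *: T x).
Proof.
case=> T_lin [M T_bd]; split.
  by move=> c x y; rewrite T_lin scalerDr !scalerA mulrC.
by exists (cabs a * M) => x; rewrite hnormZ -mulrA ler_wpM2l ?cabs_ge0.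
Qed.

Lemma bounded_add T S : bounded_op ip T -> bounded_op ip S ->
  bounded_op ip (fun x => T x + S x).
Proof.
case=> T_lin [MT T_bd] [S_lin [MS S_bd]]; split.
  by move=> c x y; rewrite T_lin S_lin scalerDr addrACA.
by exists (MT + MS) => x; rewrite mulrDl; apply: le_trans (hnormD _ _) (lerD _ _).
Qed.

Lemma bounded_sub T S : bounded_op ip T -> bounded_op ip S ->
  bounded_op ip (fun x => T x - S x).
Proof.
move=> hT /(bounded_scale (-1)); under eq_fun do rewrite scaleN1r.
exact: bounded_add.
Qed.

Lemma adj_unique T S : is_adjoint ip T S -> adj ip T = S.
Proof.
move=> TS; have [_ adjT] : is_adjoint ip T (adj ip T) by apply: epsilon_spec; exists S.
apply: boolp.funext => y; apply: ip_ext => x.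
by rewrite -adjT TS.2.
Qed.

Section Hilbert.
Hypothesis hcomp : hcomplete ip.

Lemma adjoint_exists T : bounded_op ip T -> exists S, is_adjoint ip T S.
Proof.
case=> T_lin [M T_bd].
have [S hS] : {S : H -> H & forall y x, ip (T x) y = ip x (S y)}.
  apply: (boolp.choice (P := fun y z => forall x, ip (T x) y = ip x z)) => y.
  apply: (@riesz_representation (fun x => ip (T x) y) _ (M * hnorm ip y)) => //.
    by move=> a x x'; rewrite T_lin ipDZl.
  move=> x; apply: le_trans (cauchy_schwarz _ _) _.
  by rewrite mulrAC ler_wpM2r ?hnorm_ge0.
exists S; split=> [|x y]; last exact: hS.
split=> [a y y'|].
  by apply: ip_ext => x; rewrite ipDr ipZr -!hS ipDr ipZr.
exists `|M| => y.
have key : hnorm ip (S y) ^+ 2 <= hnorm ip (S y) * (`|M| * hnorm ip y).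
  rewrite hnorm_sqr /sqnorm -hS.
  apply: le_trans (Re_le_cabs _) _; apply: le_trans (cauchy_schwarz _ _) _.
  rewrite mulrA ler_wpM2r ?hnorm_ge0 //; apply: le_trans (T_bd _) _.
  by rewrite mulrC ler_wpM2l ?hnorm_ge0 ?ler_norm.
have [->|Sy_neq0] := eqVneq (hnorm ip (S y)) 0; first by rewrite mulr_ge0 ?hnorm_ge0.
by rewrite expr2 ler_pM2l ?lt0r ?Sy_neq0 ?hnorm_ge0 in key.
Qed.

Lemma selfadjoint_sym T : bounded_op ip T -> selfadjoint ip T ->
  forall x y, ip (T x) y = ip x (T y).
Proof.
move=> hT sT.
have [_ adjT] : is_adjoint ip T (adj ip T) by apply: epsilon_spec; exact: adjoint_exists.
by rewrite sT in adjT.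
Qed.

End Hilbert.

Section Operators.
Variables B C : H -> H.
Hypotheses (hB : bounded_op ip B) (hC : bounded_op ip C).

Variable N : (H -> H) -> R.
Hypothesis hN : is_norm_on_BH ip N.
Let NBpC := N (fun x => B x + C x).
Let NBmC := N (fun x => B x - C x).

Lemma N_scale_real (s : R) T : bounded_op ip T -> N (fun x => s%:C *: T x) = `|s| * N T.
Proof. by case: hN => _ _ N_scale _ hT; rewrite N_scale // cabsR. Qed.

Lemma N_real_comb_le (a b : R) : a ^+ 2 + b ^+ 2 <= 1 ->
  N (fun x => a%:C *: B x + b%:C *: C x)
    <= (Num.sqrt 2)^-1 * Num.sqrt (NBpC ^+ 2 + NBmC ^+ 2).
Proof.
move=> ab; case: hN => N_ge0 _ _ N_tri.
have BpC := bounded_add hB hC; have BmC := bounded_sub hB hC.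
have sum : ((a + b) / 2)%:C + ((a - b) / 2)%:C = a%:C :> R[i].
  by rewrite -rmorphD; congr _%:C; field.
have diff : ((a + b) / 2)%:C - ((a - b) / 2)%:C = b%:C :> R[i].
  by rewrite -rmorphB; congr _%:C; field.
have -> : (fun x => a%:C *: B x + b%:C *: C x) = (fun x =>
    ((a + b) / 2)%:C *: (B x + C x) + ((a - b) / 2)%:C *: (B x - C x)).
  apply: boolp.funext => x.
  by rewrite scalerDr scalerBr addrACA -scalerDl -scalerBl sum diff.
apply: le_trans (N_tri _ _ (bounded_scale _ BpC) (bounded_scale _ BmC)) _.
rewrite !N_scale_real //.
exact: half_sum_diff_le (N_ge0 _ BpC) (N_ge0 _ BmC).
Qed.

Section Symmetric.
Hypotheses (symB : forall x y, ip (B x) y = ip x (B y))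
  (symC : forall x y, ip (C x) y = ip x (C y)).

Lemma ReOp_comb a b : ReOp ip (fun x => a *: B x + b *: C x) =
  (fun x => (complex.Re a)%:C *: B x + (complex.Re b)%:C *: C x).
Proof.
have adj_comb : adj ip (fun x => a *: B x + b *: C x) =
    (fun x => a^* *: B x + b^* *: C x).
  apply: adj_unique; split; first exact: bounded_add (bounded_scale _ hB) (bounded_scale _ hC).
  by move=> x y; rewrite ipDl !ipZl ipDr !ipZr symB symC !conjCK.
apply: boolp.funext => x; rewrite /ReOp adj_comb !ReJ_add.
rewrite addrACA -!scalerDl scalerDr !scalerA.
by rewrite [_^-1 * (a + _)]mulrC [_^-1 * (b + _)]mulrC.
Qed.

Lemma ReOp_expi t l1 l2 :
  ReOp ip (fun x => expi t *: (l1 *: B x + l2 *: C x)) =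
  (fun x => (complex.Re (expi t * l1))%:C *: B x + (complex.Re (expi t * l2))%:C *: C x).
Proof.
rewrite -ReOp_comb; congr (ReOp ip _); apply: boolp.funext => x.
by rewrite scalerDr !scalerA.
Qed.

Let UB := (Num.sqrt 2)^-1 * Num.sqrt (NBpC ^+ 2 + NBmC ^+ 2).
Let E := [set r : R | exists (l1 l2 : R[i]) (t : R),
  cabs l1 ^+ 2 + cabs l2 ^+ 2 <= 1 /\
  r = N (ReOp ip (fun x => expi t *: (l1 *: B x + l2 *: C x)))]%classic.

Lemma wNe_set_ub : ubound E UB.
Proof.
move=> _ [l1 [l2 [t [l12 ->]]]]; rewrite ReOp_expi; apply: N_real_comb_le.
apply: le_trans l12; rewrite -(cabs_expiM t l1) -(cabs_expiM t l2).
by apply: lerD; apply: Re_sqr_le_cabs_sqr.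
Qed.

Lemma wNe_le : wNe ip N B C <= UB.
Proof.
apply: ge_sup wNe_set_ub; eexists; exists 0, 0, 0; split; last reflexivity.
by rewrite !cabs_sqr /= expr0n /= !addr0 ler01.
Qed.

Lemma le_wNe_real (a b : R) : a ^+ 2 + b ^+ 2 <= 1 ->
  N (fun x => a%:C *: B x + b%:C *: C x) <= wNe ip N B C.
Proof.
move=> ab; apply: ub_le_sup; first by exists UB; exact: wNe_set_ub.
exists a%:C, b%:C, 0; split; first by rewrite !cabsR !real_normK ?num_real.
by rewrite ReOp_expi /expi cos0 sin0 /= !mul1r !mul0r !subr0.
Qed.

Lemma le_wNe_sum : (Num.sqrt 2)^-1 * NBpC <= wNe ip N B C.
Proof.
have s0 : 0 <= (Num.sqrt 2)^-1 :> R by rewrite invr_ge0 sqrtr_ge0.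
have s2 : (Num.sqrt 2)^-1 ^+ 2 + (Num.sqrt 2)^-1 ^+ 2 <= 1 :> R.
  by rewrite invsqrt2_sqr_add.
apply: le_trans (le_wNe_real s2).
rewrite -[X in X * _]ger0_norm // -N_scale_real; last exact: bounded_add.
have -> // : (fun x => ((Num.sqrt 2)^-1)%:C *: (B x + C x)) =
  (fun x => ((Num.sqrt 2)^-1)%:C *: B x + ((Num.sqrt 2)^-1)%:C *: C x).
by apply: boolp.funext => x; rewrite scalerDr.
Qed.

Lemma le_wNe_diff : (Num.sqrt 2)^-1 * NBmC <= wNe ip N B C.
Proof.
have s0 : 0 <= (Num.sqrt 2)^-1 :> R by rewrite invr_ge0 sqrtr_ge0.
have s2 : (Num.sqrt 2)^-1 ^+ 2 + (- (Num.sqrt 2)^-1) ^+ 2 <= 1 :> R.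
  by rewrite sqrrN invsqrt2_sqr_add.
apply: le_trans (le_wNe_real s2).
rewrite -[X in X * _]ger0_norm // -N_scale_real; last exact: bounded_sub.
have -> // : (fun x => ((Num.sqrt 2)^-1)%:C *: (B x - C x)) =
  (fun x => ((Num.sqrt 2)^-1)%:C *: B x + (- (Num.sqrt 2)^-1)%:C *: C x).
by apply: boolp.funext => x; rewrite scalerBr rmorphN scaleNr.
Qed.

End Symmetric.
End Operators.
End InnerProductSpace.

Local Close Scope complex_scope.

Theorem corollary2p8 (R : realType) (H : lmodType R[i]) (ip : H -> H -> R[i])
  (hH : is_hilbert ip) (N : (H -> H) -> R) (hN : is_norm_on_BH ip N)
  (B Cop : H -> H) (hB : bounded_op ip B) (hC : bounded_op ip Cop)
  (sB : selfadjoint ip B) (sC : selfadjoint ip Cop) :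
  let NBpC := N (fun x => B x + Cop x) in
  let NBmC := N (fun x => B x - Cop x) in
  (Num.sqrt 2)^-1 * Num.max NBpC NBmC <= wNe ip N B Cop /\
  wNe ip N B Cop <= (Num.sqrt 2)^-1 * Num.sqrt (NBpC ^+ 2 + NBmC ^+ 2).
Proof.
move=> NBpC NBmC; rewrite {}/NBpC {}/NBmC; have [hip hcomp] := hH.
have symB := selfadjoint_sym hip hcomp hB sB.
have symC := selfadjoint_sym hip hcomp hC sC.
split; last exact (wNe_le hip hB hC hN symB symC).
rewrite maxr_pMr ?invr_ge0 ?sqrtr_ge0 // ge_max.
by rewrite (le_wNe_sum hip hB hC hN symB symC) (le_wNe_diff hip hB hC hN symB symC).
Qed.
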